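(* Let $G=(V,E)$ be a finite graph with couplings $J_e>0$. Then the XOR-Ising measure satisfies, for all $\sigma\in\{-1,+1\}^V$, $$\mu^{\mathrm{XOR}}[\sigma]\propto Z_{S(\sigma),2J}.$$
   Context: $S(\sigma)=\{uv\in E\mid\sigma_u=\sigma_v\}$. For $H\subset E$ and couplings $K$, $Z_{H,K}=\sum_{\tau\in\{\pm1\}^V}\exp(\sum_{uv\in H}K_{uv}\tau_u\tau_v)$ is the Ising partition function on the spanning subgraph $(V,H)$; $2J=(2J_e)_e$. The Ising measure on $G$ is $\mu[\tau]\propto\exp(\sum_{uv\in E}J_{uv}\tau_u\tau_v)$, and $\mu^{\mathrm{XOR}}$ is the law of the pointwise product $\tau^1\tau^2$ of two independent samples of $\mu$. *)

From mathcomp Require Import all_boot all_order all_algebra.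
From mathcomp Require Import all_classical all_reals all_analysis.
Set Implicit Arguments. Unset Strict Implicit. Unset Printing Implicit Defensive.
Import Order.TTheory GRing.Theory Num.Theory.
Local Open Scope ring_scope.

Section Ising.
Variables (R : realType) (V : finType).

(* A spin configuration tau in {-1,+1}^V is encoded as a boolean function;
   true stands for +1 and false for -1. *)
Definition spin (b : bool) : R := if b then 1 else -1.

Definition simple_graph (E : {set {set V}}) : Prop :=
  forall e, e \in E -> #|e| = 2%N.

Definition edge_spin (tau : {ffun V -> bool}) (e : {set V}) : R :=
  \prod_(x in e) spin (tau x).

Definition energy (H : {set {set V}}) (K : {set V} -> R)
  (tau : {ffun V -> bool}) : R :=
  \sum_(e in H) K e * edge_spin tau e.

Definition Zpart (H : {set {set V}}) (K : {set V} -> R) : R :=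
  \sum_(tau : {ffun V -> bool}) expR (energy H K tau).

Definition ising (E : {set {set V}}) (J : {set V} -> R)
  (tau : {ffun V -> bool}) : R :=
  expR (energy E J tau) / Zpart E J.

(* Law of the pointwise product tau1 tau2 of two independent Ising samples. *)
Definition xor_ising (E : {set {set V}}) (J : {set V} -> R)
  (sigma : {ffun V -> bool}) : R :=
  \sum_(tau1 : {ffun V -> bool}) \sum_(tau2 : {ffun V -> bool} |
      [forall v, spin (sigma v) == spin (tau1 v) * spin (tau2 v)])
    ising E J tau1 * ising E J tau2.

Definition agree_edges (E : {set {set V}}) (sigma : {ffun V -> bool})
  : {set {set V}} :=
  [set e in E | [forall u in e, forall v in e, sigma u == sigma v]].

End Ising.

From mathcomp Require Import all_boot all_order all_algebra.
From mathcomp Require Import all_classical all_reals all_analysis.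
From mathcomp Require Import lra.
Import Order.TTheory GRing.Theory Num.Theory.
Local Open Scope ring_scope.

(* Given tau1, the configuration tau2 with sigma = tau1 tau2 is unique, namely
   tau2 = sigma tau1.  On an edge uv, J (tau1_u tau1_v + tau2_u tau2_v) equals
   J tau1_u tau1_v (1 + sigma_u sigma_v), i.e. 2 J tau1_u tau1_v on edges of
   S(sigma) and 0 elsewhere.  Summing over tau1 gives
   mu^XOR[sigma] = Z_{S(sigma),2J} / Z_{E,J}^2. *)

Section XorIsing.
Variables (R : realType) (V : finType).
Implicit Types (s t : {ffun V -> bool}) (e : {set V}) (E : {set {set V}}).

Lemma spin_eq (a b : bool) : spin R (a == b) = spin R a * spin R b.
Proof. by case: a; case: b; rewrite /spin /= ?mulrNN ?mulr1 ?mul1r. Qed.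

Lemma spin_inj : injective (spin R).
Proof. by case; case; rewrite /spin //= => H; exfalso; move: H; lra. Qed.

Lemma spin_sqr (a : bool) : spin R a ^+ 2 = 1.
Proof. by case: a; rewrite /spin ?expr1n ?sqrrN ?expr1n. Qed.

Definition ffun_xnor s t : {ffun V -> bool} := [ffun v => s v == t v].

Lemma spin_product_eq s t t' :
  [forall v, spin R (s v) == spin R (t v) * spin R (t' v)] =
  (t' == ffun_xnor s t).
Proof.
apply/forallP/eqP => [H | ->].
  apply/ffunP => v; rewrite ffunE; apply/spin_inj.
  by rewrite spin_eq (eqP (H v)) mulrAC -expr2 spin_sqr mul1r.
by move=> v; rewrite ffunE spin_eq mulrCA -expr2 spin_sqr mulr1.
Qed.

Lemma edge_spin_xnor s t e :
  edge_spin R (ffun_xnor s t) e = edge_spin R s e * edge_spin R t e.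
Proof.
by rewrite /edge_spin -big_split; apply: eq_bigr => x _; rewrite ffunE spin_eq.
Qed.

Lemma edge_spin_pair s e : #|e| = 2%N ->
  edge_spin R s e = if [forall u in e, forall v in e, s u == s v] then 1 else -1.
Proof.
move/eqP/cards2P => [x [y [nxy ->]]].
rewrite /edge_spin big_setU1 ?inE // big_set1 /= -spin_eq.
have -> : [forall u in [set x; y], forall v in [set x; y], s u == s v] = (s x == s y).
  apply/forallP/idP => [/(_ x) | /eqP sxy u].
    by rewrite !inE eqxx /= => /forallP /(_ y); rewrite !inE eqxx orbT.
  apply/implyP => /set2P Hu; apply/forallP => v; apply/implyP => /set2P Hv.
  by case: Hu Hv => -> [] ->; rewrite ?sxy.
by case: (s x == s y).
Qed.

Lemma energy_xnor E (J : {set V} -> R) s t : simple_graph E ->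
  energy E J t + energy E J (ffun_xnor s t) =
  energy (agree_edges E s) (fun e => 2 * J e) t.
Proof.
move=> HE; rewrite /energy -big_split /= /agree_edges.
rewrite [RHS]big_mkcond [LHS]big_mkcond /=; apply: eq_bigr => e _.
rewrite inE; case He: (e \in E) => //=.
rewrite edge_spin_xnor (edge_spin_pair s _ (HE e He)).
by case: ifP => _; rewrite ?mul1r ?mulN1r ?mulrN ?subrr // -mulrA mulr_natl mulr2n.
Qed.

Lemma Zpart_gt0 E (K : {set V} -> R) : 0 < Zpart E K.
Proof.
rewrite /Zpart (bigD1 [ffun=> true]) //= ltr_wpDr ?expR_gt0 //.
by apply: sumr_ge0 => t _; apply/ltW/expR_gt0.
Qed.

Lemma xor_isingE E (J : {set V} -> R) s :
  xor_ising E J s =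
  Zpart E J ^- 2 *
    \sum_t expR (energy E J t + energy E J (ffun_xnor s t)).
Proof.
rewrite /xor_ising mulr_sumr; apply: eq_bigr => t _.
rewrite (big_pred1 (ffun_xnor s t)) => [|t']; last exact: spin_product_eq.
by rewrite /ising expRD mulrACA mulrC -invfM.
Qed.

End XorIsing.

Theorem lemmaA3 (R : realType) (V : finType) (E : {set {set V}})
  (J : {set V} -> R) :
  simple_graph E ->
  (forall e, e \in E -> 0 < J e) ->
  exists c : R, 0 < c /\
    forall sigma : {ffun V -> bool},
      xor_ising E J sigma = c * Zpart (agree_edges E sigma) (fun e => 2 * J e).
Proof.
(* The identity holds for arbitrary couplings. *)
move=> HE _; exists (Zpart E J ^- 2); split.
  by rewrite invr_gt0 exprn_gt0 ?Zpart_gt0.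
move=> sigma; rewrite xor_isingE; congr (_ * _).
by apply: eq_bigr => t _; rewrite energy_xnor.
Qed.
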